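(* Let $K$ be a simplicial complex on the ground set $[m]$ whose Alexander dual $K^{\circ}$ is vertex decomposable, and let $v$ be a shedding vertex of $K^{\circ}$. Then $\mathrm{link}_K(v)$ and $K\setminus v$ (as complexes on $[m]\setminus\{v\}$) have vertex decomposable Alexander duals (taken with respect to the ground set $[m]\setminus\{v\}$).
   Context: A simplicial complex $K$ on a finite ground set $V$ is a family of subsets of $V$ closed under taking subsets; its Alexander dual is $K^{\circ}=\{\sigma\subseteq V:V\setminus\sigma\notin K\}$. For a vertex $v$, the deletion $K\setminus v=\{\sigma\in K: v\notin\sigma\}$ and the link $\mathrm{link}_K(v)=\{\sigma\in K: v\notin\sigma,\ \sigma\cup\{v\}\in K\}$ are complexes on $V\setminus\{v\}$. A complex $K$ is vertex decomposable if either (i) $K$ is a simplex (all subsets of some set) or $K=\{\emptyset\}$, or (ii) there is a vertex $v$, called a shedding vertex, such that $K\setminus v$ and $\mathrm{link}_K(v)$ are vertex decomposable and no facet (inclusion-maximal face) of $\mathrm{link}_K(v)$ is a facet of $K\setminus v$. *)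

From mathcomp Require Import all_boot.
Set Implicit Arguments. Unset Strict Implicit. Unset Printing Implicit Defensive.

Section Complexes.
Variable T : finType.

Definition is_complex (V : {set T}) (K : {set {set T}}) : Prop :=
  (forall s : {set T}, s \in K -> s \subset V) /\
  (forall s t : {set T}, s \in K -> t \subset s -> t \in K).

Definition alex_dual (V : {set T}) (K : {set {set T}}) : {set {set T}} :=
  [set s : {set T} | (s \subset V) && ((V :\: s) \notin K)].

Definition deletion (K : {set {set T}}) (v : T) : {set {set T}} :=
  [set s in K | v \notin s].

Definition link (K : {set {set T}}) (v : T) : {set {set T}} :=
  [set s in K | (v \notin s) && ((v |: s) \in K)].

Definition facet (K : {set {set T}}) (s : {set T}) : Prop :=
  s \in K /\ (forall t : {set T}, t \in K -> s \subset t -> t = s).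

Inductive vdec : {set T} -> {set {set T}} -> Prop :=
  | vdec_simplex (V S : {set T}) (K : {set {set T}}) :
      K = powerset S -> vdec V K
  | vdec_shed (V : {set T}) (K : {set {set T}}) (v : T) :
      v \in V ->
      vdec (V :\ v) (deletion K v) ->
      vdec (V :\ v) (link K v) ->
      (forall s : {set T}, facet (link K v) s -> ~ facet (deletion K v) s) ->
      vdec V K.

Definition shedding_vertex (V : {set T}) (K : {set {set T}}) (v : T) : Prop :=
  [/\ v \in V,
      vdec (V :\ v) (deletion K v),
      vdec (V :\ v) (link K v) &
      forall s : {set T}, facet (link K v) s -> ~ facet (deletion K v) s].

End Complexes.

From mathcomp Require Import all_boot.

(* Alexander duality exchanges deletion and link: for a shedding vertex v of the
   dual, the duals of link_K(v) and K \ v over V \ v are exactly the deletion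
   and the link of v in the dual, which are vertex decomposable by definition
   of a shedding vertex. *)

Section DualLinkDeletion.
Variables (T : finType) (V : {set T}) (K : {set {set T}}) (v : T).
Hypothesis K_closed : forall s t : {set T}, s \in K -> t \subset s -> t \in K.
Hypothesis vV : v \in V.

Lemma alex_dual_link :
  alex_dual (V :\ v) (link K v) = deletion (alex_dual V K) v.
Proof.
apply/setP => s; rewrite !inE subsetD1 -andbA; case: (s \subset V) => //=.
case vs: (v \in s); rewrite ?andbF //=.
have -> : v |: (V :\ v :\: s) = V :\: s.
  by apply/setP => x; rewrite !inE; case: eqP => // ->; rewrite vs vV.
rewrite eqxx andbT /=; case Vs: (V :\: s \in K); rewrite ?andbF //=.
by rewrite (K_closed _ _ Vs) // setSD // subsetDl.
Qed.

Lemma alex_dual_deletion :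
  alex_dual (V :\ v) (deletion K v) = link (alex_dual V K) v.
Proof.
apply/setP => s; rewrite !inE subsetD1 -andbA; case sV: (s \subset V) => //=.
case vs: (v \in s); rewrite ?andbF //=.
rewrite subUset sV sub1set vV eqxx andbT setDDl setUC.
case Vvs: (V :\: (s :|: [set v]) \in K); rewrite ?andbF ?andbT //.
apply/esym/negP => Vs.
by rewrite (K_closed _ _ Vs) ?setDS ?subsetUl in Vvs.
Qed.

End DualLinkDeletion.

Theorem lemma2p3 (m : nat) (K : {set {set 'I_m}}) (v : 'I_m) :
  is_complex [set: 'I_m] K ->
  vdec [set: 'I_m] (alex_dual [set: 'I_m] K) ->
  shedding_vertex [set: 'I_m] (alex_dual [set: 'I_m] K) v ->
  vdec ([set: 'I_m] :\ v) (alex_dual ([set: 'I_m] :\ v) (link K v)) /\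
  vdec ([set: 'I_m] :\ v) (alex_dual ([set: 'I_m] :\ v) (deletion K v)).
Proof.
move=> [_ K_closed] _ [vV vdec_del vdec_link _].
by rewrite alex_dual_link // alex_dual_deletion.
Qed.
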